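(* For the binary tree-shifts $X_5=(A,E)$ and $X_7=(A,G)$, the limit $h_{PS}$ exists and $$h_{PS}(X_5)=h_{PS}(X_7)=\sum_{n=2}^\infty\frac{\log n}{2^n}.$$
   Context: Binary tree-shifts: $k=2$, directions $a_1,a_2$, alphabet $\{0,1\}$; $(P,Q)$ is the set of trees $t:\{a_1,a_2\}^*\to\{0,1\}$ with $P_{t_x,t_{xa_1}}=1$, $Q_{t_x,t_{xa_2}}=1$ for all nodes $x$. Matrices: $A=\begin{pmatrix}1&1\\1&1\end{pmatrix}$, $E=\begin{pmatrix}1&0\\1&1\end{pmatrix}$, $G=\begin{pmatrix}1&1\\0&1\end{pmatrix}$. $p(n)$ is the number of allowed blocks of length $n$ (labellings $t|_{\Delta_n}$, $\Delta_n$ the words of length $\le n$), and $h_{PS}=\lim_{n\to\infty}\frac{\log p(n)}{1+2+\cdots+2^n}$. *)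

From HB Require Import structures.
From mathcomp Require Import all_boot all_order all_algebra.
From mathcomp Require Import all_classical all_reals all_analysis.
Set Implicit Arguments. Unset Strict Implicit. Unset Printing Implicit Defensive.
Import Order.TTheory GRing.Theory Num.Theory.

(* Alphabet {0,1} = 'I_2; directions a_1 = false, a_2 = true;
   nodes are words in seq bool, x a_i = rcons x b. *)

Definition tree := seq bool -> 'I_2.

Definition tree_shift (P Q : 'M[nat]_2) : set tree :=
  fun t => forall x : seq bool,
    P (t x) (t (rcons x false)) = 1%N /\ Q (t x) (t (rcons x true)) = 1%N.

Definition matA : 'M[nat]_2 := \matrix_(i < 2, j < 2) 1%N.
Definition matE : 'M[nat]_2 :=
  \matrix_(i < 2, j < 2) (if (val i == 0%N) && (val j == 1%N) then 0%N else 1%N).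
Definition matG : 'M[nat]_2 :=
  \matrix_(i < 2, j < 2) (if (val i == 1%N) && (val j == 0%N) then 0%N else 1%N).

Definition Delta (n : nat) := {k : 'I_n.+1 & k.-tuple bool}.
Definition word_of n (w : Delta n) : seq bool := val (tagged w).

Definition allowed_block (X : set tree) n (f : {ffun Delta n -> 'I_2}) : Prop :=
  exists t, X t /\ forall w : Delta n, f w = t (word_of w).

Definition p_count (X : set tree) (n : nat) : nat :=
  #|[set f : {ffun Delta n -> 'I_2} | `[< allowed_block X f >]]|.

Definition hPS_seq (R : realType) (X : set tree) (n : nat) : R :=
  ln ((p_count X n)%:R) / (\sum_(0 <= i < n.+1) 2 ^ i)%N%:R.

From HB Require Import structures.
From mathcomp Require Import all_boot all_order all_algebra.
From mathcomp Require Import all_classical all_reals all_analysis.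
From mathcomp Require Import ring lra zify.
Import Order.TTheory GRing.Theory Num.Theory numFieldNormedType.Exports.
Set Implicit Arguments. Unset Strict Implicit. Unset Printing Implicit Defensive.

(* An allowed block of Delta_n is the restriction of a point of
      (P,Q); it is the same as a complete binary tree of height n respecting
      the rules (P,Q) at its internal nodes, provided some symbol c may follow
      every symbol in both directions (then any such finite tree extends by c).
      Hence p(n) counts these "admissible" finite trees.
   2. Counting.  Sorting admissible trees by their root symbol gives
      N_{n+1}(i) = (sum_j P_ij N_n(j)) (sum_j Q_ij N_n(j)).  For X_5 and X_7
      this yields b_n = (n+1) a_n and p(n+1) (n+2) = (n+3) p(n)^2, p(0) = 2.
   3. Analysis.  Taking logarithms, ln p(n) = ln(n+2) + 2^(n+1) S(n+2) with
      S(N) = sum_{2 <= k < N} ln k / 2^k.  The partial sums S(N) increase and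
      are bounded by ln 2, so they converge; dividing by |Delta_n| = 2^(n+1) - 1
      shows that log p(n) / |Delta_n| converges to the same limit. *)

(* Complete binary trees of height n labelled by {0,1}: a root label and,
   when n > 0, the two subtrees of height n - 1 (direction a_1, then a_2). *)
Fixpoint fin_tree (n : nat) : finType :=
  match n with 0 => 'I_2 | m.+1 => ('I_2 * (fin_tree m * fin_tree m))%type end.

Definition root n : fin_tree n -> 'I_2 :=
  match n return fin_tree n -> 'I_2 with 0 => id | m.+1 => fun t => t.1 end.

(* The label of a finite tree at a node; words longer than the height read a leaf. *)
Fixpoint label n : fin_tree n -> seq bool -> 'I_2 :=
  match n return fin_tree n -> seq bool -> 'I_2 with
  | 0 => fun t _ => t
  | m.+1 => fun t w => if w is b :: w' then label (if b then t.2.2 else t.2.1) w'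
                       else t.1
  end.

Fixpoint tabulate n (g : tree) : fin_tree n :=
  match n return fin_tree n with
  | 0 => g [::]
  | m.+1 => (g [::], (tabulate m (fun w => g (false :: w)),
                     tabulate m (fun w => g (true :: w))))
  end.

Lemma root_label n (t : fin_tree n) : root t = label t [::].
Proof. by case: n t. Qed.

Lemma label_tabulate n g w : (size w <= n)%N -> label (tabulate n g) w = g w.
Proof. by elim: n g w => [|n IH] g [|[] w] //= Hw; rewrite IH. Qed.

Lemma fin_tree_ext n (t1 t2 : fin_tree n) :
  (forall w, (size w <= n)%N -> label t1 w = label t2 w) -> t1 = t2.
Proof.
elim: n t1 t2 => [|n IH] t1 t2 H; first exact: (H [::]).
case: t1 t2 H => r1 [L1 R1] [r2 [L2 R2]] H.
have -> : r1 = r2 by exact: (H [::]).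
congr (_, (_, _)); apply: IH => w Hw.
  exact: (H (false :: w)).
exact: (H (true :: w)).
Qed.

Definition free_symbol (P Q : 'M[nat]_2) (c : 'I_2) : Prop :=
  forall i, P i c = 1%N /\ Q i c = 1%N.

Section Admissible.
Variables P Q : 'M[nat]_2.

Fixpoint admissible n : fin_tree n -> bool :=
  match n return fin_tree n -> bool with
  | 0 => fun _ => true
  | m.+1 => fun t => [&& P t.1 (root t.2.1) == 1%N, Q t.1 (root t.2.2) == 1%N,
                        admissible t.2.1 & admissible t.2.2]
  end.

Definition rules_below n (g : tree) : Prop :=
  forall x, (size x < n)%N ->
    P (g x) (g (rcons x false)) = 1%N /\ Q (g x) (g (rcons x true)) = 1%N.

Lemma admissible_tabulate n g : rules_below n g -> admissible (tabulate n g).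
Proof.
elim: n g => [|n IH] g Hg //=.
rewrite !root_label !label_tabulate //.
have [-> ->] := Hg [::] isT.
rewrite !eqxx /=; apply/andP; split; apply: IH => x Hx.
  exact: (Hg (false :: x)).
exact: (Hg (true :: x)).
Qed.

Lemma admissible_label n (t : fin_tree n) : admissible t -> rules_below n (label t).
Proof.
elim: n t => [|n IH] // [r [L R]] /and4P [/eqP HP /eqP HQ adL adR] [|[] x] /= Hx.
- by rewrite -!root_label.
- exact: IH.
- exact: IH.
Qed.

Definition block_of n (t : fin_tree n) : {ffun Delta n -> 'I_2} :=
  [ffun w => label t (word_of w)].

Lemma size_word n (w : Delta n) : (size (word_of w) <= n)%N.
Proof. by rewrite /word_of size_tuple -ltnS. Qed.

Lemma block_of_inj n : injective (@block_of n).
Proof.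
move=> t1 t2 Heq; apply: fin_tree_ext => w Hw.
pose dw : Delta n := Tagged (fun k : 'I_n.+1 => k.-tuple bool)
                           (in_tuple w : (Ordinal (Hw : (size w < n.+1)%N)).-tuple bool).
by have := congr1 (fun f : {ffun Delta n -> 'I_2} => f dw) Heq; rewrite !ffunE.
Qed.

(* If some symbol c may follow every symbol in both directions, every
   admissible finite tree extends to a point of the tree-shift (label the
   nodes below height n by c); hence allowed blocks are exactly the blocks
   of admissible finite trees. *)
Variable c : 'I_2.
Hypothesis c_free : free_symbol P Q c.

Definition extend n (t : fin_tree n) : tree :=
  fun x => if (size x <= n)%N then label t x else c.

Lemma extend_in_shift n (t : fin_tree n) : admissible t -> tree_shift P Q (extend t).
Proof.
move=> adt x; rewrite /extend !size_rcons.
case: (ltngtP (size x) n) => Hx; [exact: admissible_label | exact: c_free | exact: c_free].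
Qed.

Lemma allowed_blockP n f : allowed_block (tree_shift P Q) f <->
  exists2 t : fin_tree n, admissible t & f = block_of t.
Proof.
split.
  case=> g [Xg Hf]; exists (tabulate n g).
    by apply: admissible_tabulate => x _; exact: Xg.
  by apply/ffunP => w; rewrite Hf ffunE label_tabulate ?size_word.
case=> t adt ->; exists (extend t); split; first exact: extend_in_shift.
by move=> w; rewrite ffunE /extend size_word.
Qed.

Lemma p_count_admissible n :
  p_count (tree_shift P Q) n = #|[set t : fin_tree n | admissible t]|.
Proof.
rewrite /p_count -(card_imset _ (@block_of_inj n)); apply: eq_card => f.
rewrite !inE; apply/asboolP/imsetP.
  by case/allowed_blockP => t adt ->; exists t; rewrite ?inE.
by case=> t; rewrite inE => adt ->; apply/allowed_blockP; exists t.
Qed.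

End Admissible.

Section RootCounts.
Variables P Q : 'M[nat]_2.

Definition rooted_count n (i : 'I_2) : nat :=
  \sum_(t : fin_tree n | root t == i) admissible P Q t.

Lemma sum_I2 (F : 'I_2 -> nat) : \sum_(j < 2) F j = F ord0 + F ord_max.
Proof.
by rewrite !big_ord_recr big_ord0 /= add0n; congr (F _ + _); apply: val_inj.
Qed.

Lemma sum_by_root n (f : 'I_2 -> nat) :
  \sum_(t : fin_tree n) f (root t) * admissible P Q t = \sum_(j < 2) f j * rooted_count n j.
Proof.
rewrite (partition_big (@root n) xpredT) //; apply: eq_bigr => j _.
rewrite big_distrr; apply: eq_big => [t | t /eqP <-] //.
Qed.

Lemma card_admissible n :
  #|[set t : fin_tree n | admissible P Q t]| = rooted_count n ord0 + rooted_count n ord_max.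
Proof.
rewrite -sum1_card big_mkcond /=.
rewrite (eq_bigr (fun t => 1 * admissible P Q t)%N); last first.
  by move=> t _; rewrite inE mul1n; case: admissible.
by rewrite (sum_by_root n (fun _ => 1%N)) sum_I2 !mul1n.
Qed.

Lemma rooted_count0 i : rooted_count 0 i = 1%N.
Proof. exact: (big_pred1_eq _ i (fun _ => 1%N)). Qed.

(* The root symbol i constrains only the roots of the two subtrees, which are
   otherwise independent admissible trees. *)
Lemma rooted_count_rec n i : rooted_count n.+1 i =
  ((\sum_(j < 2) (P i j == 1%N) * rooted_count n j) *
   (\sum_(j < 2) (Q i j == 1%N) * rooted_count n j))%N.
Proof.
pose adm2 r (lr : fin_tree n * fin_tree n) : nat :=
  [&& P r (root lr.1) == 1%N, Q r (root lr.2) == 1%N,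
      admissible P Q lr.1 & admissible P Q lr.2].
transitivity (\sum_(r | r == i) \sum_(lr : fin_tree n * fin_tree n) adm2 r lr).
  by rewrite pair_big_dep; apply: eq_bigl => -[r lr]; rewrite andbT.
rewrite big_pred1_eq -!sum_by_root big_distrlr pair_bigA.
apply: eq_bigr => -[L R] _ /=; rewrite /adm2.
by case: (P i _ == 1%N); case: (Q i _ == 1%N); case: (admissible P Q L); case: admissible.
Qed.

End RootCounts.

(* For both X_5 and X_7 the two root counts a_n, b_n of the "free" symbol and
   of the other symbol satisfy a_{n+1} = (a_n + b_n) a_n and
   b_{n+1} = (a_n + b_n)^2, so b_n = (n+1) a_n and p(n) = a_n + b_n obeys
   p(n+1) (n+2) = (n+3) p(n)^2. *)
Lemma split_count_recurrence (a b : nat -> nat) : a 0 = 1%N -> b 0 = 1%N ->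
  (forall n, a n.+1 = (a n + b n) * a n)%N ->
  (forall n, b n.+1 = (a n + b n) * (a n + b n))%N ->
  forall n, ((a n.+1 + b n.+1) * n.+2 = n.+3 * (a n + b n) ^ 2)%N.
Proof.
move=> a0 b0 a_rec b_rec.
have b_eq n : b n = (n.+1 * a n)%N.
  by elim: n => [|n IH]; rewrite ?a0 ?b0 // a_rec b_rec IH; ring.
by move=> n; rewrite a_rec b_rec b_eq; ring.
Qed.

Lemma X5_free : free_symbol matA matE ord0.
Proof. by move=> i; rewrite !mxE andbF. Qed.

Lemma X7_free : free_symbol matA matG ord_max.
Proof. by move=> i; rewrite !mxE andbF. Qed.

Lemma X5_count_recurrence n :
  (p_count (tree_shift matA matE) n.+1 * n.+2 =
   n.+3 * p_count (tree_shift matA matE) n ^ 2)%N.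
Proof.
rewrite !(p_count_admissible X5_free) !card_admissible.
apply: (split_count_recurrence (a := fun m => rooted_count matA matE m ord0)
                               (b := fun m => rooted_count matA matE m ord_max));
  rewrite ?rooted_count0 // => m;
  by rewrite rooted_count_rec !sum_I2 !mxE /=; ring.
Qed.

Lemma X7_count_recurrence n :
  (p_count (tree_shift matA matG) n.+1 * n.+2 =
   n.+3 * p_count (tree_shift matA matG) n ^ 2)%N.
Proof.
rewrite !(p_count_admissible X7_free) !card_admissible.
rewrite ![(rooted_count _ _ _ ord0 + _)%N]addnC.
apply: (split_count_recurrence (a := fun m => rooted_count matA matG m ord_max)
                               (b := fun m => rooted_count matA matG m ord0));
  rewrite ?rooted_count0 // => m;
  by rewrite rooted_count_rec !sum_I2 !mxE /=; ring.
Qed.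

Lemma p_count0 (P Q : 'M[nat]_2) (c : 'I_2) :
  free_symbol P Q c -> p_count (tree_shift P Q) 0 = 2%N.
Proof. by move=> c_free; rewrite (p_count_admissible c_free) card_admissible !rooted_count0. Qed.

Local Open Scope classical_set_scope.
Local Open Scope ring_scope.

Section LogSeries.
Variable R : realType.

Definition log_series (N : nat) : R := \sum_(2 <= k < N) ln (k%:R : R) / 2 ^+ k.

Lemma log_series_small N : (N <= 2)%N -> log_series N = 0.
Proof. by move=> HN; rewrite /log_series big_geq. Qed.

Lemma log_series_rec n : log_series n.+3 = log_series n.+2 + ln (n.+2%:R : R) / 2 ^+ n.+2.
Proof. by rewrite /log_series big_nat_recr. Qed.

Lemma log_series_nondecreasing : nondecreasing_seq log_series.
Proof.
apply/nondecreasing_seqP => -[|[|n]]; first by rewrite !log_series_small.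
  by rewrite !log_series_small.
by rewrite log_series_rec lerDl divr_ge0 ?exprn_ge0 ?ln_ge0 ?ler1n.
Qed.

(* Invariant S(n+2) + ln(2(n+2)) / 2^(n+1) <= ln 2, propagated using
   ln(n+3) <= ln(2(n+2)); in particular the partial sums are bounded. *)
Lemma log_series_tail_bound n :
  log_series n.+2 + (ln (n.+2%:R) + ln 2) / 2 ^+ n.+1 <= ln (2 : R).
Proof.
elim: n => [|n IH]; first by rewrite log_series_small // add0r expr1 ler_pdivrMr; lra.
have ln_step : ln (n.+3%:R : R) <= ln 2 + ln (n.+2%:R).
  by rewrite -lnM ?posrE ?ltr0n // ler_ln ?posrE ?ltr0n // -natrM ler_nat; lia.
apply: le_trans IH; rewrite log_series_rec -addrA lerD2l.
rewrite exprS -mulrDl ler_pdivrMr ?mulr_gt0 ?exprn_gt0 //.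
have pow_neq0 : (2 : R) ^+ n.+1 != 0 by rewrite expf_neq0.
have -> : (ln n.+2%:R + ln 2) / 2 ^+ n.+1 * (2 * 2 ^+ n.+1) = 2 * (ln n.+2%:R + ln (2 : R)).
  by field.
lra.
Qed.

Lemma log_series_bound N : log_series N <= ln (2 : R).
Proof.
apply: le_trans (log_series_tail_bound N).
have le_NS2 : log_series N <= log_series N.+2.
  by apply: log_series_nondecreasing; rewrite -addn2 leq_addr.
by rewrite ler_wpDr // divr_ge0 ?exprn_ge0 // addr_ge0 ?ln_ge0 ?ler1n.
Qed.

Lemma log_series_cvg : log_series @ \oo --> sup (range log_series).
Proof.
apply: nondecreasing_cvgn; first exact: log_series_nondecreasing.
by exists (ln 2) => _ [N _ <-]; exact: log_series_bound.
Qed.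

Lemma log_series_shift_cvg k :
  (fun n => log_series (n + k)) @ \oo --> sup (range log_series).
Proof. by rewrite (cvg_shiftn k); exact: log_series_cvg. Qed.

(* The terms of a convergent series tend to 0. *)
Lemma log_term_cvg : (fun n => ln (n.+2%:R : R) / 2 ^+ n.+1) @ \oo --> 0.
Proof.
have -> : (fun n => ln (n.+2%:R : R) / 2 ^+ n.+1) =
          (fun n => 2 * (log_series (n + 3) - log_series (n + 2))).
  apply: funext => n; rewrite !addn3 !addn2 log_series_rec addrAC subrr add0r.
  have pow_neq0 : (2 : R) ^+ n != 0 by rewrite expf_neq0.
  by rewrite !exprS; field.
rewrite -(mulr0 2) -(subrr (sup (range log_series))).
exact: cvgMl_tmp (cvgB (log_series_shift_cvg 3) (log_series_shift_cvg 2)).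
Qed.

(* The normalisation 2^(n+1) - 1 = |Delta_n| differs from 2^(n+1) by a
   factor 1 - 2^-(n+1) tending to 1. *)
Lemma geometric_correction_cvg :
  (fun n => (1 - (2^-1 : R) ^+ n.+1)^-1) @ \oo --> (1 : R).
Proof.
have half_lt1 : `|2^-1 : R| < 1 by rewrite ger0_norm ?invr_ge0 // invf_lt1 //; lra.
have : geometric (2^-1 : R) 2^-1 @ \oo --> 0 by exact: cvg_geometric.
have -> : geometric (2^-1 : R) 2^-1 = (fun n => (2^-1 : R) ^+ n.+1).
  by apply: funext => n; rewrite /geometric /= exprS.
move=> geo_cvg; rewrite -[X in _ --> X]invr1.
apply: cvgV; first exact: oner_neq0.
by rewrite -[X in _ --> X]subr0; apply: cvgB; [exact: cvg_cst | exact: geo_cvg].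
Qed.

End LogSeries.

Section Entropy.
Variable R : realType.
Variable X : set tree.
Let p := p_count X.
Hypothesis p0 : p 0 = 2%N.
Hypothesis p_rec : forall n, (p n.+1 * n.+2 = n.+3 * p n ^ 2)%N.

(* The recurrence keeps p(n) positive, so its logarithm is meaningful. *)
Lemma p_count_gt0 n : (0 < p n)%N.
Proof.
elim: n => [|n IH]; first by rewrite p0.
by have := p_rec n; rewrite -mulnn; nia.
Qed.

Let lnp n : R := ln (p n)%:R.

Lemma lnp_rec n : lnp n.+1 + ln n.+2%:R = ln n.+3%:R + 2 * lnp n.
Proof.
have := congr1 (fun m : nat => ln (m%:R : R)) (p_rec n).
rewrite !natrM !lnM ?posrE ?ltr0n ?p_count_gt0 ?mulr_gt0 ?ltr0n ?p_count_gt0 // => ->.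
by rewrite /lnp; ring.
Qed.

Lemma lnp_closed n : lnp n = ln n.+2%:R + 2 ^+ n.+1 * log_series R n.+2.
Proof.
elim: n => [|n IH]; first by rewrite /lnp p0 log_series_small // mulr0 addr0.
have pow_neq0 : (2 : R) ^+ n.+1 != 0 by rewrite expf_neq0.
have := lnp_rec n; rewrite IH log_series_rec [2 ^+ n.+2]exprS => /(canRL (addrK _)) ->.
by field.
Qed.

Lemma size_Delta n : ((\sum_(0 <= i < n.+1) 2 ^ i)%N%:R : R) = 2 ^+ n.+1 - 1.
Proof.
rewrite big_mkord; have := predn_exp 2 n.+1; rewrite mul1n => <-.
by rewrite -subn1 natrB ?expn_gt0 // natrX.
Qed.

Lemma hPS_formula n : hPS_seq R X n =
  (ln n.+2%:R / 2 ^+ n.+1 + log_series R n.+2) * (1 - (2^-1 : R) ^+ n.+1)^-1.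
Proof.
rewrite /hPS_seq size_Delta -/(lnp n) lnp_closed exprVn.
have two_le_pow : (2 : R) <= 2 ^+ n.+1 by rewrite exprS ler_peMr // exprn_ege1 // ler1n.
have pow_neq0 : (2 : R) ^+ n.+1 != 0 by rewrite expf_neq0.
have pow_sub1_neq0 : (2 : R) ^+ n.+1 - 1 != 0 by rewrite subr_eq0; apply/eqP; lra.
by field; rewrite pow_neq0 pow_sub1_neq0.
Qed.

Lemma hPS_cvg : hPS_seq R X @ \oo --> sup (range (log_series R)).
Proof.
rewrite (funext hPS_formula) -[sup _]mulr1 -[sup _]add0r.
apply: cvgM; last exact: geometric_correction_cvg.
apply: cvgD; first exact: log_term_cvg.
have -> : (fun n => log_series R n.+2) = (fun n => log_series R (n + 2)).
  by apply: funext => n; rewrite addn2.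
exact: log_series_shift_cvg.
Qed.

End Entropy.

Theorem mainTheorem14 (R : realType) :
  exists S : R,
    ((fun N : nat => \sum_(2 <= k < N) ln (k%:R : R) / 2 ^+ k) @ \oo --> S) /\
    (hPS_seq R (tree_shift matA matE) @ \oo --> S) /\
    (hPS_seq R (tree_shift matA matG) @ \oo --> S).
Proof.
exists (sup (range (log_series R))); split; first exact: log_series_cvg.
split; apply: hPS_cvg.
- exact: p_count0 X5_free.
- exact: X5_count_recurrence.
- exact: p_count0 X7_free.
- exact: X7_count_recurrence.
Qed.
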